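(* Let $v_0=(q^c-1)(q^b+q^{b-1}-1)$. For all integers $v\ge v_0$ and $s,t\ge0$, $$\#\Omega_{v,0,s,t}=1-g+v+q^{b-1}s+(q-1)t.$$
   Context: $q$ is a power of a prime $p$, $b\ge1$ an integer, $a=b+1$, $c=a+b$, $N_k=(q^k-1)/(q-1)$, and $g=\frac12\big((q^c-2)(q^{a-1}+q^{b-1}-2)+(q^c-q)\big)$. For integers $v,r,s,t$: $\Omega_{v,r,s,t}=\{(i,j,k)\in\mathbb{Z}^3:\ -v\le i,\ -r\le i+(q^c-1)k<-r+(q^c-1),\ -s\le -q^ai+(q^c-1)j<(q^c-1)-s,\ -t\le q^{a-1}N_bi-q^{b-1}N_cj-(q^{a-1}-1)N_ck\}$. *)

From HB Require Import structures.
From mathcomp Require Import all_boot all_order all_algebra.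
Set Implicit Arguments. Unset Strict Implicit. Unset Printing Implicit Defensive.
Import Order.TTheory GRing.Theory Num.Theory.
Local Open Scope ring_scope.

Definition prime_power (q : nat) : Prop :=
  exists p n : nat, prime p /\ (0 < n)%N /\ q = (p ^ n)%N.

Definition Nk (q k : nat) : int :=
  ((q%:Z ^+ k - 1) %/ (q%:Z - 1))%Z.

Definition genus (q b : nat) : int :=
  let a := b.+1 in let c := (a + b)%N in
  (((q%:Z ^+ c - 2) * (q%:Z ^+ a.-1 + q%:Z ^+ b.-1 - 2) + (q%:Z ^+ c - q%:Z))
     %/ 2)%Z.

Definition Omega (q b : nat) (v r s t : int) (x : int * int * int) : Prop :=
  let a := b.+1 in let c := (a + b)%N in
  let Q := q%:Z ^+ c - 1 in
  let: (i, j, k) := x in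
  [/\ - v <= i,
      - r <= i + Q * k /\ i + Q * k < - r + Q,
      - s <= - (q%:Z ^+ a) * i + Q * j /\ - (q%:Z ^+ a) * i + Q * j < Q - s
    & - t <= q%:Z ^+ a.-1 * Nk q b * i - q%:Z ^+ b.-1 * Nk q c * j
              - (q%:Z ^+ a.-1 - 1) * Nk q c * k].

Definition card_is (P : int * int * int -> Prop) (n : int) : Prop :=
  exists l : seq (int * int * int),
    [/\ uniq l, (forall x, x \in l <-> P x) & (size l)%:Z = n].

From HB Require Import structures.
From mathcomp Require Import all_boot all_order all_algebra.
From mathcomp Require Import ring zify.
Import Order.TTheory GRing.Theory Num.Theory.
Local Open Scope ring_scope.

(* Given i, the two middle conditions of Omega determine k = -(i div Q) and
   j = -((s - q^a i) div Q), where Q = q^c - 1, so Omega is in bijection with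
   the admissible i.  Writing i = Q m + r with 0 <= r < Q, the first condition
   becomes m >= lo r and the last one m <= hi r, both floors of affine functions
   of r; for v >= v0 no window [lo r, hi r] has negative length, hence
   #Omega = sum_(r < Q) (hi r - lo r + 1).  Each sum of floors of an affine
   function over full periods has a closed form, because the slopes are prime
   to the moduli and the residues therefore run through 0, ..., M - 1; the
   formula for #Omega is then an algebraic identity. *)

Lemma addz_mulr_in_range (d w k : int) : 0 < d ->
  (0 <= w + d * k < d) = (k == - (w %/ d)%Z).
Proof.
move=> d_gt0; apply/idP/eqP => [/andP[ge0 ltd] | ->].
- have -> : w = - k * d + (w + d * k) by ring.
  by rewrite divzMDl ?gt_eqF // divz_small ?addr0 ?opprK // gtz0_abs // ge0 ltd.
- have -> : w + d * - (w %/ d)%Z = (w %% d)%Z by rewrite /modz; ring.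
  by rewrite modz_ge0 ?gt_eqF // ltz_pmod.
Qed.

Lemma sum_modz_affine (M : nat) (a c : int) : coprimez a M ->
  \sum_(r < M) ((a * r%:Z + c) %% M%:Z)%Z = \sum_(r < M) r%:Z.
Proof.
case: M => [|M] coaM; first by rewrite !big_ord0.
pose f (r : 'I_M.+1) : 'I_M.+1 := inord (absz ((a * r%:Z + c) %% M.+1%:Z)%Z).
have mod_ge0 x : 0 <= (x %% M.+1%:Z)%Z by rewrite modz_ge0.
have fE r : (f r)%:Z = ((a * r%:Z + c) %% M.+1%:Z)%Z.
  by rewrite inordK ?gez0_abs // -ltz_nat gez0_abs // ltz_pmod.
have f_inj : injective f.
  move=> r1 r2 /(congr1 (fun r : 'I__ => r%:Z)); rewrite !fE => /eqP.
  rewrite eqz_modDr eqz_mod_dvd -mulrBr Gauss_dvdzr; last by rewrite coprimez_sym.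
  rewrite -eqz_mod_dvd !modz_small ?ltz_nat ?ltn_ord // eqz_nat => /eqP.
  exact: val_inj.
by rewrite [RHS](reindex_inj f_inj); apply: eq_bigr => r _; rewrite fE.
Qed.

Lemma sumr_nat_periodic (V : nmodType) (M n : nat) (F : nat -> V) :
  (forall r, F (r + M)%N = F r) ->
  \sum_(0 <= r < n * M) F r = (\sum_(0 <= r < M) F r) *+ n.
Proof.
move=> F_per; have F_perM k r : F (r + k * M)%N = F r.
  by elim: k => [|k IHk]; rewrite ?addn0 // mulSnr addnA F_per.
elim: n => [|n IHn]; first by rewrite mul0n big_geq.
rewrite mulSnr (@big_cat_nat _ _ _ (n * M)) ?leq_addr //= IHn mulrSr; congr (_ + _).
by rewrite (big_addn 0 _ (n * M)) addKn; apply: eq_bigr => r _; rewrite F_perM.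
Qed.

Lemma twice_triangular_sumz (M : nat) :
  2 * \sum_(0 <= r < M) r%:Z = M%:Z * (M%:Z - 1).
Proof.
elim: M => [|M IHM]; first by rewrite big_geq.
by rewrite big_nat_recr //= mulrDr IHM -[M.+1]addn1 PoszD; ring.
Qed.

Lemma sum_divz_affine (M n : nat) (a c : int) : coprimez a M ->
  let N := (n * M)%N in
  2 * M%:Z * \sum_(0 <= r < N) ((a * r%:Z + c) %/ M%:Z)%Z
  = a * N%:Z * (N%:Z - 1) + 2 * N%:Z * c - n%:Z * M%:Z * (M%:Z - 1).
Proof.
move=> coaM N.
have sum_affine : 2 * \sum_(0 <= r < N) (a * r%:Z + c)
                  = a * N%:Z * (N%:Z - 1) + 2 * N%:Z * c.
  rewrite big_split /= -mulr_sumr sumr_const_nat subn0 mulrDr mulrCA.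
  by rewrite twice_triangular_sumz -mulr_natr natz; ring.
have sum_mod : \sum_(0 <= r < N) ((a * r%:Z + c) %% M%:Z)%Z
               = n%:Z * \sum_(0 <= r < M) r%:Z.
  rewrite sumr_nat_periodic => [|r]; last first.
    by rewrite PoszD mulrDr addrAC addrC modzMDl.
  by rewrite big_mkord sum_modz_affine // big_mkord -mulr_natl natz.
have divmod : \sum_(0 <= r < N) (a * r%:Z + c)
    = \sum_(0 <= r < N) ((a * r%:Z + c) %/ M%:Z)%Z * M%:Z
      + \sum_(0 <= r < N) ((a * r%:Z + c) %% M%:Z)%Z.
  by rewrite -big_split; apply: eq_bigr => r _; exact: divz_eq.
rewrite -sum_affine divmod sum_mod -mulr_suml.
set S := \sum_(0 <= r < N) _; set T := \sum_(0 <= r < M) _.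
have -> : 2 * (S * M%:Z + n%:Z * T) = 2 * M%:Z * S + n%:Z * (2 * T) by ring.
by rewrite twice_triangular_sumz; ring.
Qed.

Definition quotient_window_seq (M : nat) (lo hi : int -> int) : seq int :=
  [seq M%:Z * (lo r%:Z + n%:Z) + r%:Z
     | r <- iota 0 M, n <- iota 0 (absz (hi r%:Z - lo r%:Z + 1))].

Section QuotientWindow.
Variables (M : nat) (lo hi : int -> int).
Hypothesis window_ok : forall r : nat, (r < M)%N -> lo r%:Z <= hi r%:Z + 1.

Let divmodzMDl (k : int) {r : nat} : (r < M)%N ->
  ((M%:Z * k + r%:Z) %/ M%:Z)%Z = k /\ ((M%:Z * k + r%:Z) %% M%:Z)%Z = r%:Z.
Proof.
move=> lt_rM; have r_small : 0 <= r%:Z < `|M%:Z|%:Z by rewrite ltz_nat.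
rewrite mulrC divzMDl ?modzMDl ?divz_small ?modz_small ?addr0 //.
by rewrite eqz_nat -lt0n (leq_ltn_trans _ lt_rM).
Qed.

Let window_len (r : nat) : (r < M)%N ->
  (absz (hi r%:Z - lo r%:Z + 1))%:Z = hi r%:Z - lo r%:Z + 1.
Proof. by move=> /window_ok lo_le; rewrite gez0_abs //; lia. Qed.

Lemma quotient_window_seq_uniq : uniq (quotient_window_seq M lo hi).
Proof.
apply: allpairs_uniq_dep => [|r _|]; rewrite ?iota_uniq //.
move=> [r1 n1] [r2 n2] /allpairsPdep [x1 [y1 [x1_in _ [-> ->]]]].
move=> /allpairsPdep [x2 [y2 [x2_in _ [-> ->]]]] /= eq12.
move: x1_in x2_in; rewrite !mem_iota /= !add0n => lt_x1M lt_x2M.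
have [div1 mod1] := divmodzMDl (lo x1%:Z + y1%:Z) lt_x1M.
have [div2 mod2] := divmodzMDl (lo x2%:Z + y2%:Z) lt_x2M.
have ex : x1 = x2 by apply/eqP; rewrite -eqz_nat -mod1 -mod2 eq12.
subst x2; move: div1; rewrite eq12 div2 => /addrI/eqP.
by rewrite eqz_nat => /eqP->.
Qed.

Lemma mem_quotient_window_seq (i : int) : (0 < M)%N ->
  (i \in quotient_window_seq M lo hi)
  = (lo (i %% M%:Z)%Z <= (i %/ M%:Z)%Z <= hi (i %% M%:Z)%Z).
Proof.
move=> M_gt0; apply/allpairsPdep/idP.
- move=> [r [n [+ + ->]]]; rewrite !mem_iota /= => lt_rM.
  have [-> ->] := divmodzMDl (lo r%:Z + n%:Z) lt_rM.
  by rewrite -ltz_nat window_len //; lia.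
- move=> window_i; have M_gt0z : 0 < M%:Z by rewrite ltz_nat.
  set r := absz (i %% M%:Z)%Z; set n := absz ((i %/ M%:Z)%Z - lo r%:Z).
  have rE : r%:Z = (i %% M%:Z)%Z by rewrite gez0_abs // modz_ge0 ?gt_eqF.
  have nE : n%:Z = (i %/ M%:Z)%Z - lo r%:Z by rewrite gez0_abs // rE; lia.
  have lt_rM : (r < M)%N by rewrite -ltz_nat rE ltz_pmod.
  exists r, n; rewrite !mem_iota /= !add0n lt_rM.
  rewrite -[(n < _)%N]ltz_nat window_len // nE rE; split=> //; first lia.
  by rewrite [lo _ + _]addrC subrK mulrC -divz_eq.
Qed.

Lemma size_quotient_window_seq :
  (size (quotient_window_seq M lo hi))%:Z = \sum_(0 <= r < M) (hi r%:Z - lo r%:Z + 1).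
Proof.
rewrite size_allpairs_dep sumnE big_map -natz natr_sum /index_iota subn0.
rewrite big_seq [RHS]big_seq; apply: eq_bigr => r; rewrite mem_iota => /andP[_ lt_rM].
by rewrite size_iota natz window_len.
Qed.

End QuotientWindow.

(* [Omega q b.+1 v 0 s t] with Y = q^b, Nb = N_(b+1) and Nc = N_c, so that
   every power of q occurring in it is a monomial in q and Y. *)
Definition OmegaY (q Y Nb Nc v s t : int) (x : int * int * int) : Prop :=
  let Q := q ^+ 3 * Y ^+ 2 - 1 in
  let: (i, j, k) := x in
  [/\ - v <= i,
      0 <= i + Q * k /\ i + Q * k < Q,
      - s <= - (q ^+ 2 * Y) * i + Q * j /\ - (q ^+ 2 * Y) * i + Q * j < Q - s
    & - t <= q * Y * Nb * i - Y * Nc * j - (q * Y - 1) * Nc * k].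

Section CountOmegaY.
Variables (q Y Nb Nc v s t : int).
Hypotheses (q_ge2 : 2 <= q) (Y_ge1 : 1 <= Y).
Hypothesis NbE : (q - 1) * Nb = q * Y - 1.
Hypothesis NcE : (q - 1) * Nc = q ^+ 3 * Y ^+ 2 - 1.
Hypothesis v_large : (q ^+ 3 * Y ^+ 2 - 1) * (q * Y + Y - 1) <= v.
Hypotheses (s_ge0 : 0 <= s) (t_ge0 : 0 <= t).

Let Q := q ^+ 3 * Y ^+ 2 - 1.
Let A := q ^+ 2 * Y.
Let B := q * Y * Nb.
Let J (i : int) := - ((s - A * i) %/ Q)%Z.
Let K (i : int) := - (i %/ Q)%Z.
Let lo (r : int) := - ((v + r) %/ Q)%Z.
Let hi (r : int) := ((B * r + t) %/ Nc)%Z - Y * J r.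

Let Q_gt0 : 0 < Q.
Proof. rewrite /Q; nia. Qed.

Let Nc_gt0 : 0 < Nc.
Proof. have := Q_gt0; rewrite /Q -NcE; nia. Qed.

Let J_divmod i : J i = A * (i %/ Q)%Z + J (i %% Q)%Z.
Proof.
rewrite /J {1}(divz_eq i Q).
have -> : s - A * ((i %/ Q)%Z * Q + (i %% Q)%Z)
          = - (A * (i %/ Q)%Z) * Q + (s - A * (i %% Q)%Z) by ring.
by rewrite divzMDl ?gt_eqF //; ring.
Qed.

Let form_divmod i :
  q * Y * Nb * i - Y * Nc * J i - (q * Y - 1) * Nc * K i
  = - Nc * (i %/ Q)%Z + B * (i %% Q)%Z - Y * Nc * J (i %% Q)%Z.
Proof.
rewrite J_divmod /K; set m := (i %/ Q)%Z; set r := (i %% Q)%Z.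
rewrite [in q * Y * Nb * i](divz_eq i Q) -/m -/r /B /A /Q -NcE.
apply/eqP; rewrite -subr_eq0; apply/eqP.
transitivity (m * Nc * (q * Y) * ((q - 1) * Nb - (q * Y - 1))); first by ring.
by rewrite NbE subrr mulr0.
Qed.

Let lo_spec i : (- v <= i) = (lo (i %% Q)%Z <= (i %/ Q)%Z).
Proof.
rewrite /lo [X in _ = X]lerNl lez_divRL // mulNr; have := divz_eq i Q; lia.
Qed.

Let hi_spec m r : (- t <= - Nc * m + B * r - Y * Nc * J r) = (m <= hi r).
Proof.
rewrite /hi [X in _ = X]lerBrDr lez_divRL //.
have -> : (m + Y * J r) * Nc = Nc * m + Y * Nc * J r by ring.
lia.
Qed.

Let OmegaY_iff i j k : OmegaY q Y Nb Nc v s t (i, j, k)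
  <-> [/\ j = J i, k = K i & lo (i %% Q)%Z <= (i %/ Q)%Z <= hi (i %% Q)%Z].
Proof.
rewrite /OmegaY -/Q -/A.
have k_iff : (0 <= i + Q * k /\ i + Q * k < Q) <-> k = K i.
  by rewrite (rwP andP) addz_mulr_in_range // (rwP eqP).
have j_iff : (- s <= - A * i + Q * j /\ - A * i + Q * j < Q - s) <-> j = J i.
  rewrite (rwP eqP) -addz_mulr_in_range //; split=> [[] | /andP[]]; lia.
split=> [[lo_i /k_iff-> /j_iff-> form_i] | [jE kE /andP[lo_i hi_i]]].
- by rewrite -lo_spec lo_i -hi_spec -form_divmod.
- by split; [rewrite lo_spec | apply/k_iff | apply/j_iff | rewrite jE kE form_divmod hi_spec].
Qed.

(* The only use of the lower bound on v. *)
Let window_ok r : 0 <= r < Q -> lo r <= hi r + 1.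
Proof.
move=> /andP[r_ge0 lt_rQ]; rewrite /lo /hi.
set D := ((v + r) %/ Q)%Z; set F := ((B * r + t) %/ Nc)%Z.
have D_ge : q * Y + Y - 1 <= D by rewrite lez_divRL // mulrC; lia.
have F_gt : q * Y * (q * Y - 1) * r < Q * (F + 1).
  have := ltz_ceil (B * r + t) Nc_gt0; rewrite -/F => ltF.
  have -> : q * Y * (q * Y - 1) * r = (q - 1) * (B * r) by rewrite /B -NbE; ring.
  rewrite /Q -NcE -mulrA ltr_pM2l; last lia.
  by rewrite mulrC; lia.
have QJ_lt : Q * J r < A * r - s + Q.
  by have := ltz_ceil (s - A * r) Q_gt0; rewrite /J; lia.
have YJ_lt : Y * J r < F + 1 + q * Y + Y.
  rewrite -(ltr_pM2l Q_gt0).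
  have YQJ : Q * (Y * J r) <= Y * (A * r + Q - 1) by rewrite mulrCA ler_pM2l; lia.
  have qYr : q * Y * r <= q * Y * (Q - 1) by rewrite ler_pM2l; lia.
  have YAQ : Y * (A * r + Q - 1) = q * Y * (q * Y - 1) * r + q * Y * r + Y * (Q - 1).
    by rewrite /A; ring.
  lia.
lia.
Qed.

Let Qn := absz Q.
Let QnE : Qn%:Z = Q. Proof. by rewrite gez0_abs // ltW. Qed.
Let Ncn := absz Nc.
Let NcnE : Ncn%:Z = Nc. Proof. by rewrite gez0_abs // ltW. Qed.
Let qn := absz (q - 1).
Let qnE : qn%:Z = q - 1. Proof. by rewrite gez0_abs //; lia. Qed.
Let QnM : Qn = (qn * Ncn)%N.
Proof. by apply/eqP; rewrite -eqz_nat PoszM qnE NcnE QnE /Q -NcE. Qed.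

Let coprime_B_Nc : coprimez B Nc.
Proof.
have q1_neq0 : q - 1 != 0 by rewrite subr_eq0 gt_eqF // (lt_le_trans _ q_ge2).
rewrite /B coprimezMl; apply/andP; split; apply/coprimezP.
  by exists (q * (q * Y), - (q - 1)) => /=; rewrite mulNr NcE; ring.
exists (- (q * (q * Y) + q), 1) => /=; apply: (mulfI q1_neq0).
have -> : (q - 1) * (- (q * (q * Y) + q) * Nb + 1 * Nc)
          = - (q * (q * Y) + q) * ((q - 1) * Nb) + (q - 1) * Nc by ring.
by rewrite NbE NcE; ring.
Qed.

Let sum_divz_B :
  2 * \sum_(0 <= r < Qn) ((B * r%:Z + t) %/ Nc)%Z
  = (q - 1) * (B * (Q - 1) + 2 * t - Nc + 1).
Proof.
have := @sum_divz_affine Ncn qn B t; rewrite NcnE => /(_ coprime_B_Nc) /=.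
rewrite -QnM QnE qnE => sumNc; apply: (mulfI (lt0r_neq0 Nc_gt0)).
by rewrite mulrA [Nc * 2]mulrC sumNc /Q -NcE; ring.
Qed.

Let sum_divz_A :
  2 * \sum_(0 <= r < Qn) ((s - A * r%:Z) %/ Q)%Z = - A * (Q - 1) + 2 * s - (Q - 1).
Proof.
have coAQ : coprimez (- A) Qn.
  by apply/coprimezP; exists (- (q * Y), -1); rewrite QnE /A /Q /=; ring.
have /= := @sum_divz_affine Qn 1 (- A) s coAQ; rewrite mul1n QnE => sumQ.
apply: (mulfI (lt0r_neq0 Q_gt0)); rewrite mulrA [Q * 2]mulrC.
under eq_bigr do rewrite addrC -mulNr.
by rewrite sumQ; ring.
Qed.

Let sum_divz_v : \sum_(0 <= r < Qn) ((v + r%:Z) %/ Q)%Z = v.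
Proof.
have co1Q : coprimez 1 Qn by apply/coprimezP; exists (1, 0); rewrite /=; ring.
have /= := @sum_divz_affine Qn 1 1 v co1Q; rewrite mul1n QnE => sumQ.
have Q2_neq0 : 2 * Q != 0 by rewrite mulf_neq0 // lt0r_neq0.
apply: (mulfI Q2_neq0); under eq_bigr => r _ do rewrite addrC -[r%:Z]mul1r.
by rewrite sumQ; ring.
Qed.

Let sum_window :
  \sum_(0 <= r < Qn) (hi r%:Z - lo r%:Z + 1)
  = 1 - (((q ^+ 3 * Y ^+ 2 - 2) * (q * Y + Y - 2) + (q ^+ 3 * Y ^+ 2 - q)) %/ 2)%Z
    + v + Y * s + (q - 1) * t.
Proof.
set W := \sum_(0 <= r < Qn) ((B * r%:Z + t) %/ Nc)%Z.
set U := \sum_(0 <= r < Qn) ((s - A * r%:Z) %/ Q)%Z.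
have sum_split : \sum_(0 <= r < Qn) (hi r%:Z - lo r%:Z + 1) = W + Y * U + v + Q.
  rewrite (eq_bigr (fun r : nat => ((B * r%:Z + t) %/ Nc)%Z
      + Y * ((s - A * r%:Z) %/ Q)%Z + ((v + r%:Z) %/ Q)%Z + 1)) => [|r _].
    by rewrite !big_split /= -mulr_sumr sumr_const_nat subn0 natz QnE sum_divz_v.
  by rewrite /hi /lo /J; ring.
have G2 : (q ^+ 3 * Y ^+ 2 - 2) * (q * Y + Y - 2) + (q ^+ 3 * Y ^+ 2 - q)
          = 2 * (1 + v + Y * s + (q - 1) * t - (W + Y * U + v + Q)).
  have -> : 2 * (1 + v + Y * s + (q - 1) * t - (W + Y * U + v + Q))
          = 2 + 2 * Y * s + 2 * (q - 1) * t - 2 * W - Y * (2 * U) - 2 * Q by ring.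
  rewrite sum_divz_B sum_divz_A.
  have -> : (q - 1) * (B * (Q - 1) + 2 * t - Nc + 1)
          = q * Y * (Q - 1) * ((q - 1) * Nb) + 2 * (q - 1) * t - (q - 1) * Nc + (q - 1).
    by rewrite /B; ring.
  by rewrite NbE NcE /Q /A; ring.
by rewrite sum_split G2 mulKz //; ring.
Qed.

Lemma card_is_OmegaY :
  card_is (OmegaY q Y Nb Nc v s t)
    (1 - (((q ^+ 3 * Y ^+ 2 - 2) * (q * Y + Y - 2) + (q ^+ 3 * Y ^+ 2 - q)) %/ 2)%Z
     + v + Y * s + (q - 1) * t).
Proof.
have Qn_gt0 : (0 < Qn)%N by rewrite -ltz_nat QnE.
have window_okn r : (r < Qn)%N -> lo r%:Z <= hi r%:Z + 1.
  by move=> lt_rQ; apply: window_ok; rewrite -QnE ltz_nat lt_rQ andbT.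
exists [seq (i, J i, K i) | i <- quotient_window_seq Qn lo hi]; split.
- by rewrite map_inj_uniq ?quotient_window_seq_uniq // => i1 i2 [].
- move=> [[i j] k]; rewrite OmegaY_iff; split.
    move=> /mapP[i' i'_in [-> -> ->]]; split=> //.
    by rewrite -QnE -(@mem_quotient_window_seq Qn lo hi window_okn).
  move=> [-> -> window_i]; apply: map_f.
  by rewrite (@mem_quotient_window_seq Qn lo hi window_okn) // QnE.
- by rewrite size_map size_quotient_window_seq // sum_window.
Qed.
End CountOmegaY.

Lemma eq_card_is (P P' : int * int * int -> Prop) (n : int) :
  (forall x, P x <-> P' x) -> card_is P' n -> card_is P n.
Proof. by move=> PP' [l [uniq_l mem_l size_l]]; exists l; split=> // x; rewrite PP'. Qed.

Lemma prime_power_gt1 (q : nat) : prime_power q -> (1 < q)%N.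
Proof.
move=> [p [n [p_prime [n_gt0 ->]]]]; apply: leq_trans (prime_gt1 p_prime) _.
by rewrite -{1}(expn1 p) leq_pexp2l // prime_gt0.
Qed.

Lemma mul_Nk (q k : nat) : (q%:Z - 1) * Nk q k = q%:Z ^+ k - 1.
Proof.
rewrite /Nk; have -> : q%:Z ^+ k - 1 = (q%:Z - 1) * \sum_(i < k) q%:Z ^+ (k.-1 - i) * 1 ^+ i.
  by rewrite -subrXX expr1n.
have [->|q1_neq0] := eqVneq (q%:Z - 1) 0; first by rewrite !mul0r.
by rewrite mulKz.
Qed.

Theorem lemma3 (q b : nat) (v s t : int) :
  prime_power q -> (1 <= b)%N ->
  let c := (b.+1 + b)%N in
  (q%:Z ^+ c - 1) * (q%:Z ^+ b + q%:Z ^+ b.-1 - 1) <= v ->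
  0 <= s -> 0 <= t ->
  card_is (Omega q b v 0 s t)
    (1 - genus q b + v + q%:Z ^+ b.-1 * s + (q%:Z - 1) * t).
Proof.
move=> /prime_power_gt1 q_gt1; case: b => [//|b] _ c v_large s_ge0 t_ge0.
set Y := q%:Z ^+ b.
have qcE : q%:Z ^+ c = q%:Z ^+ 3 * Y ^+ 2.
  by rewrite -exprM -exprD; congr (_ ^+ _); rewrite /c; lia.
have qaE : q%:Z ^+ b.+2 = q%:Z ^+ 2 * Y by rewrite -exprD.
have qbE : q%:Z ^+ b.+1 = q%:Z * Y by rewrite exprS.
have NbE := mul_Nk q b.+1; have NcE := mul_Nk q c.
rewrite /= -/Y qbE in v_large; rewrite qcE in NcE v_large; rewrite qbE in NbE.
have q_ge2 : 2 <= q%:Z by rewrite lez_nat.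
have Y_ge1 : 1 <= Y by rewrite exprn_ege1 // lez_nat ltnW.
have := @card_is_OmegaY q%:Z Y _ _ v s t q_ge2 Y_ge1 NbE NcE v_large s_ge0 t_ge0.
rewrite /genus /= -/Y qcE qbE; apply: eq_card_is => -[[i j] k].
by rewrite /Omega /OmegaY /= oppr0 add0r -/Y qcE qaE qbE.
Qed.
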